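(* Let $\delta\ge3$. A $\delta$-PHO $K^{(\delta)}$ is separable within a rotation of Cartesian coordinates if and only if $\operatorname{rank}\mathcal M(K^{(\delta)})=1$.
   Context: A $\delta$-PHO is the Hamiltonian $K^{(\delta)}(q,p)=\tfrac12\sum_{j=1}^2(p_j^2+q_j^2)+V^{(\delta)}(q)$ on $\mathbb R^4$, with $V^{(\delta)}(q)=\sum_{h=0}^{\delta}v^{(\delta)}_h\binom{\delta}{h}q_1^hq_2^{\delta-h}$, real coefficients, $V^{(\delta)}\not\equiv0$. $\mathcal M(K^{(\delta)})$ is the $2\times(\delta-1)$ matrix whose $(h+1)$-st column, $h=0,\dots,\delta-2$, is $\big(v^{(\delta)}_h-v^{(\delta)}_{h+2},\ 2v^{(\delta)}_{h+1}\big)^T$. With $\sigma(\psi)=\begin{pmatrix}\cos\psi&-\sin\psi\\ \sin\psi&\cos\psi\end{pmatrix}$, the $\delta$-PHO is separable within a rotation of Cartesian coordinates if there exist $\psi\in[0,2\pi)$ and reals $(\tilde v_0,\tilde v_\delta)\ne(0,0)$ with $V^{(\delta)}(\sigma(\psi)^{-1}\tilde q)=\tilde v_0\tilde q_2^{\delta}+\tilde v_\delta\tilde q_1^{\delta}$ for all $\tilde q\in\mathbb R^2$. *)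

From HB Require Import structures.
From mathcomp Require Import all_boot all_order all_algebra.
From mathcomp Require Import reals trigo.
Set Implicit Arguments. Unset Strict Implicit. Unset Printing Implicit Defensive.
Import Order.TTheory GRing.Theory Num.Theory.
Local Open Scope ring_scope.

Section PHO.
Variable R : realType.

Definition qc1 (q : 'cV[R]_2) : R := q ord0 ord0.
Definition qc2 (q : 'cV[R]_2) : R := q ord_max ord0.

(* V^(delta)(q) = sum_{h=0}^{delta} v_h binom(delta,h) q_1^h q_2^(delta-h);
   coefficients v_0..v_delta given by v : nat -> R (other values irrelevant) *)
Definition PHO_V (delta : nat) (v : nat -> R) (q : 'cV[R]_2) : R :=
  \sum_(h < delta.+1) v h * ('C(delta, h))%:R * qc1 q ^+ h * qc2 q ^+ (delta - h).

(* the 2 x (delta-1) matrix M(K^(delta)); column h+1 (h = 0..delta-2) is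
   (v_h - v_{h+2}, 2 v_{h+1})^T *)
Definition PHO_M (delta : nat) (v : nat -> R) : 'M[R]_(2, delta.-1) :=
  \matrix_(i < 2, j < delta.-1)
     (if i == ord0 then v j - v j.+2 else 2 * v j.+1).

Definition sigma_rot (psi : R) : 'M[R]_2 :=
  \matrix_(i < 2, j < 2)
    (if i == ord0 then (if j == ord0 then cos psi else - sin psi)
     else (if j == ord0 then sin psi else cos psi)).

Definition separable_within_rotation (delta : nat) (v : nat -> R) : Prop :=
  exists psi : R, 0 <= psi < 2 * pi /\
  exists vt0 vtd : R, (vt0, vtd) <> (0, 0) /\
    forall qt : 'cV[R]_2,
      PHO_V delta v (invmx (sigma_rot psi) *m qt)
      = vt0 * qc2 qt ^+ delta + vtd * qc1 qt ^+ delta.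

End PHO.

From HB Require Import structures.
From mathcomp Require Import all_boot all_order all_algebra.
From mathcomp Require Import reals trigo.
From mathcomp Require Import ring lra zify.
Set Implicit Arguments. Unset Strict Implicit. Unset Printing Implicit Defensive.
Import Order.TTheory GRing.Theory Num.Theory.
Local Open Scope ring_scope.

(* Separability in a rotated frame means that v is the coefficient sequence of
   A (s q_1 + c q_2)^d + B (c q_1 - s q_2)^d with (c, s) = (cos psi, sin psi).
   For such v every column of M is a multiple of (cos 2psi, sin 2psi), so M has
   rank one (it is nonzero when V is, as d >= 3).  Conversely, if M has rank
   one, write a nonzero column as r (cos 2psi, sin 2psi): the vanishing of the
   2x2 minors of M is a two-step linear recurrence for v whose solutions are
   exactly these coefficient sequences, unless psi is a multiple of pi/2, in
   which case the recurrence kills the mixed coefficients and V is separable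
   in the original frame. *)

Lemma det_mx2 (R : comNzRingType) (N : 'M[R]_2) :
  \det N = N ord0 ord0 * N ord_max ord_max - N ord0 ord_max * N ord_max ord0.
Proof.
rewrite (expand_det_row _ ord0) !big_ord_recl big_ord0 /cofactor !det_mx11 !mxE /=.
rewrite addr0 !expr0 !mul1r expr1 mulN1r mulrN.
by congr (_ * _ - _ * _); congr (N _ _); exact: val_inj.
Qed.

Lemma mxrank_le1_minor (F : fieldType) m (M : 'M[F]_(2, m)) j k :
  (\rank M <= 1)%N -> M ord0 j * M ord_max k - M ord0 k * M ord_max j = 0.
Proof.
move=> rankM; apply/eqP; apply: contraTT rankM => minor_neq0; rewrite -ltnNge.
pose g (l : 'I_2) := if l == ord0 then j else k.
pose N := colsub g M.
have detN : \det N = M ord0 j * M ord_max k - M ord0 k * M ord_max j.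
  by rewrite det_mx2 !mxE.
have rankN : \rank N = 2%N by rewrite mxrank_unit // unitmxE detN unitfE.
apply: leq_trans (mxrankM_maxl M (colsub g 1%:M)).
by rewrite mulmx_colsub mulmx1 rankN.
Qed.

Section TwoStepRecurrence.
Variable F : fieldType.

Definition rec2 (a b e : F) (u : nat -> F) (n : nat) : Prop :=
  forall k, (k.+2 <= n)%N -> a * u k + b * u k.+1 + e * u k.+2 = 0.

Lemma rec2_uniq (a b e : F) (u w : nat -> F) n :
  e != 0 -> rec2 a b e u n -> rec2 a b e w n ->
  u 0%N = w 0%N -> u 1%N = w 1%N -> forall h, (h <= n)%N -> u h = w h.
Proof.
move=> e_neq0 recu recw u0 u1.
have step h : (h < n)%N -> u h = w h /\ u h.+1 = w h.+1.
  elim: h => [//|h IH] hn; have [uh uh1] := IH (ltnW hn); split=> //.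
  move: (recu h hn) (recw h hn); rewrite uh uh1 => ru rw.
  by apply: (mulfI e_neq0); apply: (addrI (a * w h + b * w h.+1)); rewrite ru rw.
by case=> [//|h] hn; case: (step h hn).
Qed.

End TwoStepRecurrence.

Section Trigonometry.
Variable R : realType.

Lemma unit_circle_angle (x y : R) : x ^+ 2 + y ^+ 2 = 1 ->
  exists t, 0 <= t <= 2 * pi /\ cos t = x /\ sin t = y.
Proof.
move=> xy.
have x_itv : -1 <= x <= 1 by apply/andP; split; nra.
have pi_gt0 := @pi_gt0 R.
have sin_acos_x : sin (acos x) = `|y|.
  by rewrite sin_acos // -sqrtr_sqr; congr Num.sqrt; lra.
have := acos_ge0 x_itv; have := acos_lepi x_itv.
have [y_ge0|y_lt0] := lerP 0 y => acos_le acos_ge.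
  exists (acos x); split; first by apply/andP; split; lra.
  by rewrite acosK // sin_acos_x ger0_norm.
exists (- acos x + pi *+ 2); split; first by apply/andP; split; rewrite mulr2n; lra.
by rewrite cosD2pi sinD2pi cosN sinN acosK // sin_acos_x ltr0_norm ?opprK.
Qed.

Lemma polar_double_angle (x y : R) : (x != 0) || (y != 0) ->
  exists r psi, 0 < r /\ 0 <= psi < 2 * pi /\
    x = r * (cos psi ^+ 2 - sin psi ^+ 2) /\ y = r * (2 * sin psi * cos psi).
Proof.
move=> xy_neq0.
have norm_gt0 : 0 < x ^+ 2 + y ^+ 2.
  by case/orP: xy_neq0 => ?; [apply: ltr_pwDl | apply: ltr_pwDr];
    rewrite ?sqr_ge0 // lt0r sqrf_eq0 sqr_ge0 andbT.
set r := Num.sqrt (x ^+ 2 + y ^+ 2).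
have r_gt0 : 0 < r by rewrite sqrtr_gt0.
have r_neq0 : r != 0 by rewrite gt_eqF.
have : (x / r) ^+ 2 + (y / r) ^+ 2 = 1.
  by rewrite !expr_div_n -mulrDl sqr_sqrtr ?ltW // mulfV ?gt_eqF.
move=> /unit_circle_angle [t [/andP [t_ge0 t_le] [cos_t sin_t]]].
have pi_gt0 := @pi_gt0 R.
have half_t : t = t / 2 + t / 2 by field.
exists r, (t / 2); split=> //; split; first by apply/andP; split; lra.
split; apply: (mulfI (invr_neq0 r_neq0)); rewrite mulKf // mulrC.
- by rewrite -cos_t [in LHS]half_t cosD; ring.
- by rewrite -sin_t [in LHS]half_t sinD; ring.
Qed.

End Trigonometry.

Section PHO.
Variable R : realType.
Implicit Types (v w : nat -> R) (A B c s psi : R).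

Lemma qc1_sigma_rot psi (q : 'cV[R]_2) :
  qc1 (sigma_rot psi *m q) = cos psi * qc1 q - sin psi * qc2 q.
Proof.
rewrite /qc1 /qc2 mxE !big_ord_recl big_ord0 !mxE /=.
have -> : lift ord0 ord0 = ord_max :> 'I_2 by apply/val_inj.
by rewrite addr0 mulNr.
Qed.

Lemma qc2_sigma_rot psi (q : 'cV[R]_2) :
  qc2 (sigma_rot psi *m q) = sin psi * qc1 q + cos psi * qc2 q.
Proof.
rewrite /qc1 /qc2 mxE !big_ord_recl big_ord0 !mxE /=.
have -> : lift ord0 ord0 = ord_max :> 'I_2 by apply/val_inj.
by rewrite addr0.
Qed.

Lemma sigma_rot_unit psi : sigma_rot psi \in unitmx.
Proof.
suff inv : sigma_rot psi *m sigma_rot (- psi) = 1%:M by case: (mulmx1_unit inv).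
apply/matrixP => i j; rewrite !mxE !big_ord_recl big_ord0 !mxE /= cosN sinN.
have := cos2Dsin2 psi.
by case: i => [[|[|//]] ?]; case: j => [[|[|//]] ?] /=; nra.
Qed.

(* For (c, s) = (cos psi, sin psi) these are the potentials that become
   A qt_2^d + B qt_1^d in the coordinates qt = sigma(psi) q. *)
Definition sep_coef d A B c s (h : nat) : R :=
  A * s ^+ h * c ^+ (d - h) + B * c ^+ h * (- s) ^+ (d - h).

Lemma PHO_V_sep_coef d A B c s q :
  PHO_V d (sep_coef d A B c s) q =
  A * (s * qc1 q + c * qc2 q) ^+ d + B * (c * qc1 q - s * qc2 q) ^+ d.
Proof.
rewrite (addrC (s * _)) (_ : c * qc1 q - s * qc2 q = - s * qc2 q + c * qc1 q);
  last by ring.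
rewrite !exprDn !mulr_sumr -big_split /=.
by apply: eq_bigr => h _; rewrite /sep_coef !exprMn; ring.
Qed.

Lemma PHO_V_eq_coef d v w : (forall h, (h <= d)%N -> v h = w h) ->
  forall q, PHO_V d v q = PHO_V d w q.
Proof. by move=> vw q; apply: eq_bigr => h _; rewrite vw // -ltnS. Qed.

(* Dehomogenize at q_2 = 1: a polynomial of degree at most d with d + 1 roots
   is zero. *)
Lemma PHO_V_coef_inj d v w : (forall q, PHO_V d v q = PHO_V d w q) ->
  forall h, (h <= d)%N -> v h = w h.
Proof.
move=> Vvw h hd.
pose q (x : R) : 'cV[R]_2 := \col_i (if i == ord0 then x else 1).
pose p := \poly_(i < d.+1) ((v i - w i) * ('C(d, i))%:R).
have p_root x : p.[x] = 0.
  rewrite horner_poly; transitivity (PHO_V d v (q x) - PHO_V d w (q x)).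
    by rewrite -sumrB; apply: eq_bigr => i _; rewrite /qc1 /qc2 !mxE /= expr1n; ring.
  by rewrite Vvw subrr.
have p_eq0 : p = 0.
  apply: (@roots_geq_poly_eq0 _ p [seq i%:R | i <- iota 0 d.+1]).
  - by apply/allP => x _; rewrite /root p_root.
  - by rewrite map_inj_uniq ?iota_uniq // => a b /eqP; rewrite eqr_nat => /eqP.
  - by rewrite size_map size_iota size_poly.
move: (congr1 (fun p : {poly R} => p`_h) p_eq0).
rewrite coef_poly coef0 ltnS hd => /eqP.
by rewrite mulf_eq0 pnatr_eq0 eqn0Ngt bin_gt0 hd orbF subr_eq0 => /eqP.
Qed.

Lemma separable_sep_coefP d v : ~ (forall q, PHO_V d v q = 0) ->
  separable_within_rotation d v <->
  exists psi, 0 <= psi < 2 * pi /\ exists A B,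
    forall h, (h <= d)%N -> v h = sep_coef d A B (cos psi) (sin psi) h.
Proof.
move=> V_neq0; split.
- case=> psi [psi_itv [A [B [_ Vsep]]]]; exists psi; split=> //; exists A, B.
  apply: PHO_V_coef_inj => q; rewrite PHO_V_sep_coef.
  have := Vsep (sigma_rot psi *m q).
  by rewrite mulKmx ?sigma_rot_unit // qc1_sigma_rot qc2_sigma_rot.
- case=> psi [psi_itv [A [B vsep]]]; exists psi; split=> //; exists A, B; split.
    by case=> A0 B0; apply: V_neq0 => q; rewrite (PHO_V_eq_coef vsep) A0 B0
      PHO_V_sep_coef; ring.
  move=> qt; rewrite -[in RHS](mulKVmx (sigma_rot_unit psi) qt).
  by rewrite qc1_sigma_rot qc2_sigma_rot (PHO_V_eq_coef vsep) PHO_V_sep_coef.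
Qed.

Lemma rank_PHO_M_sep_coef n v A B c s :
  (forall h, (h <= n.+2)%N -> v h = sep_coef n.+2 A B c s h) ->
  (\rank (PHO_M n.+2 v) <= 1)%N.
Proof.
move=> vsep.
have -> : PHO_M n.+2 v =
    (\col_(i < 2) (if i == ord0 then c ^+ 2 - s ^+ 2 else 2 * s * c)) *m
    (\row_(j < n.+1) (A * s ^+ j * c ^+ (n - j) - B * c ^+ j * (- s) ^+ (n - j))).
  apply/matrixP => i [j /= jn]; rewrite !mxE big_ord1 !mxE /=.
  rewrite !vsep /sep_coef; [| lia..].
  have -> : (n.+2 - j = (n - j).+2)%N by lia.
  have -> : (n.+2 - j.+1 = (n - j).+1)%N by lia.
  by rewrite subSS; case: i => [[|[|//]] ?] /=; rewrite !exprS; ring.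
by rewrite (leq_trans (mxrankM_maxl _ _)) ?rank_leq_col.
Qed.

(* Fails for d = 2: v = (1, 0, 1), i.e. V = q_1^2 + q_2^2, has M = 0. *)
Lemma PHO_M_eq0 n v : PHO_M n.+3 v = 0 -> forall q, PHO_V n.+3 v q = 0.
Proof.
move=> M0 q.
have col0 j : (j < n.+2)%N -> v j = v j.+2 /\ v j.+1 = 0.
  move=> jn; have := congr1 (fun M : 'M_(2, n.+2) => M ord0 (Ordinal jn)) M0.
  have := congr1 (fun M : 'M_(2, n.+2) => M ord_max (Ordinal jn)) M0.
  rewrite !mxE /= => /eqP; rewrite mulf_eq0 pnatr_eq0 /= => /eqP vj1 /eqP.
  by rewrite subr_eq0 => /eqP.
have v0 h : (h <= n.+3)%N -> v h = 0.
  case: h => [|h] hn; first by rewrite (col0 0%N _).1 ?(col0 1%N _).2.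
  have [hlt|hge] := ltnP h n.+2; first exact: (col0 h hlt).2.
  have -> : h = n.+2 by lia.
  by rewrite -(col0 n.+1 _).1 ?(col0 n _).2.
by rewrite /PHO_V big1 // => h _; rewrite v0 ?mul0r // -ltnS.
Qed.

Lemma rank1_PHO_M_rec n v : \rank (PHO_M n.+2 v) = 1%N ->
  exists psi, 0 <= psi < 2 * pi /\
    rec2 (sin psi * cos psi) (sin psi ^+ 2 - cos psi ^+ 2)
         (- (sin psi * cos psi)) v n.+2.
Proof.
set M := PHO_M n.+2 v => rankM.
have /matrix0Pn [i [j Mij]] : M != 0 by rewrite -mxrank_eq0 rankM.
have /polar_double_angle : (M ord0 j != 0) || (M ord_max j != 0).
  by case: i Mij => [[|[|//]] ?] Mij; apply/orP; [left|right];
    congr (M _ _ != 0): Mij; apply: val_inj.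
move=> [r [psi [r_gt0 [psi_itv [Mj0 Mj1]]]]]; exists psi; split=> // k kn.
have := mxrank_le1_minor j (Ordinal (kn : (k < n.+1)%N)) (eq_leq rankM).
rewrite Mj0 Mj1 !mxE /= => minor0.
have r2_neq0 : 2 * r != 0 by rewrite mulf_neq0 ?pnatr_eq0 ?gt_eqF.
by apply: (mulfI r2_neq0); rewrite mulr0 -oppr0 -minor0; ring.
Qed.

Lemma sep_coef_rec2 d A B c s :
  rec2 (s * c) (s ^+ 2 - c ^+ 2) (- (s * c)) (sep_coef d A B c s) d.
Proof.
move=> k kd; rewrite /sep_coef.
have -> : (d - k = (d - k.+2).+2)%N by lia.
have -> : (d - k.+1 = (d - k.+2).+1)%N by lia.
by rewrite !exprS; ring.
Qed.

(* The recurrence determines v from v_0 and v_1, and both can be matched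
   since (A c^n, B (-s)^n) is the rotation by (c, s) of (v_0, v_1). *)
Lemma rec2_sep_coef n v c s : c ^+ 2 + s ^+ 2 = 1 -> s * c != 0 ->
  rec2 (s * c) (s ^+ 2 - c ^+ 2) (- (s * c)) v n.+1 ->
  exists A B, forall h, (h <= n.+1)%N -> v h = sep_coef n.+1 A B c s h.
Proof.
move=> cs; rewrite mulf_eq0 negb_or => /andP [s_neq0 c_neq0] recv.
have cn_neq0 : c ^+ n != 0 by rewrite expf_neq0.
have sn_neq0 : (- s) ^+ n != 0 by rewrite expf_neq0 // oppr_eq0.
exists ((c * v 0%N + s * v 1%N) / c ^+ n), ((- s * v 0%N + c * v 1%N) / (- s) ^+ n).
apply: (rec2_uniq _ recv (sep_coef_rec2 _ _ _ _)).
- by rewrite oppr_eq0 mulf_neq0.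
- by rewrite /sep_coef subn0 !exprS -[v 0%N]mul1r -{1}cs; field; apply/andP.
- by rewrite /sep_coef subSS subn0 -[v 1%N]mul1r -{1}cs; field; apply/andP.
Qed.

Lemma rec2_axes n v c s : c ^+ 2 + s ^+ 2 = 1 -> s * c = 0 ->
  rec2 (s * c) (s ^+ 2 - c ^+ 2) (- (s * c)) v n.+1 ->
  forall h, (h <= n.+1)%N -> v h = sep_coef n.+1 (v 0%N) (v n.+1) 1 0 h.
Proof.
move=> cs sc0 recv.
have diff_sq : (s ^+ 2 - c ^+ 2) ^+ 2 = 1.
  transitivity ((c ^+ 2 + s ^+ 2) ^+ 2 - 4 * (s * c) ^+ 2); first by ring.
  by rewrite cs sc0; ring.
have diff_neq0 : s ^+ 2 - c ^+ 2 != 0.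
  by apply/eqP => diff0; move: diff_sq; rewrite diff0 expr0n /= => /esym/eqP;
    rewrite oner_eq0.
have mixed0 h : (0 < h < n.+1)%N -> v h = 0.
  case: h => [//|k] /= kn; have := recv k kn.
  rewrite sc0 oppr0 !mul0r add0r addr0 => /eqP.
  by rewrite mulf_eq0 (negbTE diff_neq0) => /eqP.
move=> h hn; rewrite /sep_coef oppr0 !expr1n !mulr1.
have [->|h_gt0] := posnP h; first by rewrite subn0 expr0 expr0n mulr0 addr0 mulr1.
have [->|h_neq] := eqVneq h n.+1; first by rewrite subnn expr0 expr0n mulr0 add0r mulr1.
have h_lt : (h < n.+1)%N by rewrite ltn_neqAle h_neq hn.
rewrite mixed0 ?h_gt0 // !expr0n eqn0Ngt h_gt0 subn_eq0 leqNgt h_lt /=.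
by rewrite !mulr0 addr0.
Qed.

End PHO.

Theorem mainTheorem3 (R : realType) (delta : nat) (v : nat -> R) :
  (3 <= delta)%N ->
  ~ (forall q : 'cV[R]_2, PHO_V delta v q = 0) ->
  (separable_within_rotation delta v <-> \rank (PHO_M delta v) = 1%N).
Proof.
case: delta => [|[|[|n]]] // _ V_neq0.
rewrite (separable_sep_coefP V_neq0); split.
- case=> psi [_ [A [B vsep]]]; apply/eqP.
  rewrite eqn_leq (rank_PHO_M_sep_coef vsep) lt0n mxrank_eq0.
  by apply/eqP => /PHO_M_eq0.
- move=> /rank1_PHO_M_rec [psi [psi_itv recv]].
  have cs := cos2Dsin2 psi.
  have [sc0|sc_neq0] := eqVneq (sin psi * cos psi) 0.
    exists 0; split; first by rewrite lexx mulr_gt0 ?pi_gt0.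
    by exists (v 0%N), (v n.+3); rewrite cos0 sin0; exact: rec2_axes cs sc0 recv.
  by exists psi; split=> //; exact: rec2_sep_coef cs sc_neq0 recv.
Qed.
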